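(* The categories $\mathsf{Dial}_M(\mathsf{Set})$, for $M$ a biclosed poset, form a sound and complete model of the Lambek Calculus $\mathrm{L}$ (without modalities). Precisely: - Soundness: for every biclosed poset $M$, every interpretation of the atoms in $\mathsf{Dial}_M(\mathsf{Set})$, and every sequent $A_1,\dots,A_n\vdash B$ derivable in $\mathrm{L}$, there is a morphism $[\![A_1]\!]\otimes\cdots\otimes[\![A_n]\!]\to[\![B]\!]$, where the empty tensor is $I$. - Completeness: if a sequent is valid in this sense in all such models, then it is derivable in $\mathrm{L}$.
   Context: Biclosed poset: a partially ordered monoid $(M,\le,\circ,e)$, not necessarily commutative, with $\circ$ monotone in each argument, in which for all $a,b\in M$ there exist - $a\rightharpoonup b$, the largest $x$ with $a\circ x\le b$; - $b\leftharpoonup a$, the largest $x$ with $x\circ a\le b$. $\mathsf{Dial}_M(\mathsf{Set})$: - Objects are $(U,X,\alpha)$ with $U,X$ sets and $\alpha:U\times X\to M$. - Morphisms $(f,F):(U,X,\alpha)\to(V,Y,\beta)$ are pairs $f:U\to V$, $F:Y\to X$ with $\alpha(u,F(y))\le\beta(f(u),y)$ for all $u,y$. - Composition is $(g,G)\circ(f,F)=(gf,FG)$. Monoidal biclosed structure: - Tensor: $(U,X,\alpha)\otimes(V,Y,\beta)=(U\times V,(V\to X)\times(U\to Y),\alpha\otimes\beta)$ with $(\alpha\otimes\beta)((u,v),(h,k))=\alpha(u,h(v))\circ\beta(k(u),v)$. - Unit: $I=(\mathbb{1},\mathbb{1},e)$. - For $A=(U,X,\alpha)$ and $C=(V,Y,\beta)$,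 $A\rightharpoonup C=((U\to V)\times(Y\to X),U\times Y,\alpha\rightharpoonup\beta)$ with $(\alpha\rightharpoonup\beta)((h,H),(u,y))=\alpha(u,H(y))\rightharpoonup\beta(h(u),y)$. - Likewise $C\leftharpoonup A=((U\to V)\times(Y\to X),U\times Y,\beta\leftharpoonup\alpha)$ with $(\beta\leftharpoonup\alpha)((h,H),(u,y))=\beta(h(u),y)\leftharpoonup\alpha(u,H(y))$. An interpretation assigns an object to each atom and extends to formulas by $[\![I]\!]=I$, $[\![A\otimes B]\!]=[\![A]\!]\otimes[\![B]\!]$, $[\![A\rightharpoonup B]\!]=[\![A]\!]\rightharpoonup[\![B]\!]$, $[\![A\leftharpoonup B]\!]=[\![A]\!]\leftharpoonup[\![B]\!]$. The Lambek Calculus $\mathrm{L}$: formulas are built from atoms, the constant $I$, and the binary connectives $\otimes$, $\rightharpoonup$, $\leftharpoonup$. Sequents are $\Gamma\vdash A$ with $\Gamma$ a finite sequence (not a multiset) of formulas. The rules are: - axiom: $A\vdash A$; - cut: from $\Gamma\vdash A$ and $\Delta_1,A,\Delta_2\vdash B$ infer $\Delta_1,\Gamma,\Delta_2\vdash B$; - $I$-right: $\vdash I$; - $I$-left: from $\Gamma,\Delta\vdash A$ infer $\Gamma,I,\Delta\vdash A$; - $\otimes$-left: from $\Gamma,A,B,\Delta\vdash C$ infer $\Gamma,A\otimes B,\Delta\vdash C$; - $\otimes$-right: from $\Gamma\vdash A$ and $\Delta\vdash B$ infer $\Gamma,\Delta\vdash A\otimes B$; - $\rightharpoonup$-right: from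 $A,\Gamma\vdash B$ infer $\Gamma\vdash A\rightharpoonup B$; - $\rightharpoonup$-left: from $\Gamma\vdash A$ and $\Delta_1,B,\Delta_2\vdash C$ infer $\Delta_1,\Gamma,A\rightharpoonup B,\Delta_2\vdash C$; - $\leftharpoonup$-right: from $\Gamma,B\vdash A$ infer $\Gamma\vdash A\leftharpoonup B$; - $\leftharpoonup$-left: from $\Gamma\vdash B$ and $\Delta_1,A,\Delta_2\vdash C$ infer $\Delta_1,A\leftharpoonup B,\Gamma,\Delta_2\vdash C$. There are no weakening, contraction or exchange rules. *)

From Stdlib Require Import List.
Import ListNotations.

Record BiclosedPoset := {
  car : Type;
  le : car -> car -> Prop;
  op : car -> car -> car;
  e : car;
  le_refl : forall a, le a a;
  le_trans : forall a b c, le a b -> le b c -> le a c;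
  le_antisym : forall a b, le a b -> le b a -> a = b;
  op_assoc : forall a b c, op (op a b) c = op a (op b c);
  op_unit_l : forall a, op e a = a;
  op_unit_r : forall a, op a e = a;
  op_mono_l : forall a a' b, le a a' -> le (op a b) (op a' b);
  op_mono_r : forall a b b', le b b' -> le (op a b) (op a b');
  rimp : car -> car -> car;
  rimp_in : forall a b, le (op a (rimp a b)) b;
  rimp_max : forall a b x, le (op a x) b -> le x (rimp a b);
  limp : car -> car -> car;
  limp_in : forall a b, le (op (limp b a) a) b;
  limp_max : forall a b x, le (op x a) b -> le x (limp b a)
}.

Record DObj (M : BiclosedPoset) := mkDObj {
  dU : Type;
  dX : Type;
  drel : dU -> dX -> car M
}.
Arguments mkDObj {M}.
Arguments dU {M}.
Arguments dX {M}.
Arguments drel {M}.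

Record DHom {M : BiclosedPoset} (A C : DObj M) := {
  hf : dU A -> dU C;
  hF : dX C -> dX A;
  hcond : forall u y, le M (drel A u (hF y)) (drel C (hf u) y)
}.

Definition dtensor {M : BiclosedPoset} (A B : DObj M) : DObj M :=
  mkDObj (dU A * dU B)%type ((dU B -> dX A) * (dU A -> dX B))%type
    (fun uv hk => op M (drel A (fst uv) (fst hk (snd uv)))
                       (drel B (snd uv) (snd hk (fst uv)))).

Definition dunit (M : BiclosedPoset) : DObj M :=
  mkDObj unit unit (fun _ _ => e M).

Definition drimp {M : BiclosedPoset} (A C : DObj M) : DObj M :=
  mkDObj ((dU A -> dU C) * (dX C -> dX A))%type (dU A * dX C)%type
    (fun hH uy => rimp M (drel A (fst uy) (snd hH (snd uy)))
                         (drel C (fst hH (fst uy)) (snd uy))).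

Definition dlimp {M : BiclosedPoset} (C A : DObj M) : DObj M :=
  mkDObj ((dU A -> dU C) * (dX C -> dX A))%type (dU A * dX C)%type
    (fun hH uy => limp M (drel C (fst hH (fst uy)) (snd uy))
                         (drel A (fst uy) (snd hH (snd uy)))).

Inductive formula : Type :=
| Atom : nat -> formula
| One : formula
| Tens : formula -> formula -> formula
| RImp : formula -> formula -> formula
| LImp : formula -> formula -> formula.

Inductive derivable : list formula -> formula -> Prop :=
| d_ax : forall A, derivable [A] A
| d_cut : forall G D1 D2 A B,
    derivable G A -> derivable (D1 ++ A :: D2) B ->
    derivable (D1 ++ G ++ D2) B
| d_Ir : derivable [] One
| d_Il : forall G D A, derivable (G ++ D) A -> derivable (G ++ One :: D) A
| d_tensl : forall G D A B C,
    derivable (G ++ A :: B :: D) C -> derivable (G ++ Tens A B :: D) C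
| d_tensr : forall G D A B,
    derivable G A -> derivable D B -> derivable (G ++ D) (Tens A B)
| d_rimpr : forall G A B, derivable (A :: G) B -> derivable G (RImp A B)
| d_rimpl : forall G D1 D2 A B C,
    derivable G A -> derivable (D1 ++ B :: D2) C ->
    derivable (D1 ++ G ++ RImp A B :: D2) C
| d_limpr : forall G A B, derivable (G ++ [B]) A -> derivable G (LImp A B)
| d_limpl : forall G D1 D2 A B C,
    derivable G B -> derivable (D1 ++ A :: D2) C ->
    derivable (D1 ++ LImp A B :: G ++ D2) C.

Fixpoint interp {M : BiclosedPoset} (v : nat -> DObj M) (A : formula) : DObj M :=
  match A with
  | Atom n => v n
  | One => dunit M
  | Tens A B => dtensor (interp v A) (interp v B)
  | RImp A B => drimp (interp v A) (interp v B)
  | LImp A B => dlimp (interp v A) (interp v B)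
  end.

Fixpoint interp_ctx {M : BiclosedPoset} (v : nat -> DObj M) (G : list formula)
  : DObj M :=
  match G with
  | [] => dunit M
  | [A] => interp v A
  | A :: G' => dtensor (interp v A) (interp_ctx v G')
  end.

Definition valid (G : list formula) (B : formula) : Prop :=
  forall (M : BiclosedPoset) (v : nat -> DObj M),
    inhabited (DHom (interp_ctx v G) (interp v B)).

(* Soundness: Dial_M(Set) is a monoidal biclosed category (the tensor is
   associative and unital up to isomorphism, and each of the two residuals is
   right adjoint to tensoring on the corresponding side), so every rule of L is
   modelled by composing structural morphisms; only the existence of morphisms
   matters, i.e. the preorder they induce on objects.
   Completeness: the Lindenbaum-Tarski algebra of L (formulas modulo
   interderivability, ordered by single-premise derivability) is a biclosed
   poset. Interpreting every atom p as the one-point object whose relation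
   has value [p], each formula A is interpreted by an object with nonempty
   carriers whose relation is constantly [A]; a morphism [[G]] -> [[B]] thus
   yields [tensor of G] <= [B] there, i.e. a derivation. *)
From Stdlib Require Import List ProofIrrelevance ClassicalEpsilon FunctionalExtensionality PropExtensionality.
Import ListNotations.

Arguments hf {M A C} _ _.
Arguments hF {M A C} _ _.
Arguments hcond {M A C} _ _ _.
Arguments Build_DHom {M A C} & _ _ _.

Lemma le_of_eq {M : BiclosedPoset} (a b : car M) : a = b -> le M a b.
Proof. intros ->; apply le_refl. Qed.

Section DialecticaStructure.

Context {M : BiclosedPoset}.
Implicit Types A B C : DObj M.

Definition dhom_id A : DHom A A :=
  {| hf := fun u => u; hF := fun x => x; hcond := fun u x => le_refl M _ |}.

Definition dhom_comp {A B C} (g : DHom B C) (f : DHom A B) : DHom A C :=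
  {| hf := fun u => hf g (hf f u); hF := fun z => hF f (hF g z);
     hcond := fun u z => le_trans M _ _ _ (hcond f u (hF g z)) (hcond g (hf f u) z) |}.

Definition dhom_tensor {A A' B B'} (f : DHom A A') (g : DHom B B') :
  DHom (dtensor A B) (dtensor A' B').
Proof.
  refine (Build_DHom (fun uv : dU A * dU B => (hf f (fst uv), hf g (snd uv)))
          (fun hk : (dU B' -> dX A') * (dU A' -> dX B') =>
             (fun v => hF f (fst hk (hf g v)), fun u => hF g (snd hk (hf f u)))) _).
  intros [u v] [h k]; simpl.
  eapply le_trans; [apply op_mono_l, (hcond f) | apply op_mono_r, (hcond g)].
Defined.

Definition dtensor_unit_l A : DHom (dtensor (dunit M) A) A.
Proof.
  refine (Build_DHom (fun uv : unit * dU A => snd uv)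
          (fun x => (fun _ => tt, fun _ => x) : (dU A -> unit) * (unit -> dX A)) _).
  intros [u v] x; apply le_of_eq, op_unit_l.
Defined.

Definition dtensor_unit_l_inv A : DHom A (dtensor (dunit M) A).
Proof.
  refine (Build_DHom (fun u => (tt, u) : unit * dU A)
          (fun hk : (dU A -> unit) * (unit -> dX A) => snd hk tt) _).
  intros u [h k]; apply le_of_eq; symmetry; apply op_unit_l.
Defined.

Definition dtensor_unit_r A : DHom (dtensor A (dunit M)) A.
Proof.
  refine (Build_DHom (fun uv : dU A * unit => fst uv)
          (fun x => (fun _ => x, fun _ => tt) : (unit -> dX A) * (dU A -> unit)) _).
  intros [u v] x; apply le_of_eq, op_unit_r.
Defined.

Definition dtensor_unit_r_inv A : DHom A (dtensor A (dunit M)).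
Proof.
  refine (Build_DHom (fun u => (u, tt) : dU A * unit)
          (fun hk : (unit -> dX A) * (dU A -> unit) => fst hk tt) _).
  intros u [h k]; apply le_of_eq; symmetry; apply op_unit_r.
Defined.

Definition dtensor_assoc A B C :
  DHom (dtensor (dtensor A B) C) (dtensor A (dtensor B C)).
Proof.
  refine (Build_DHom (fun u : (dU A * dU B) * dU C => (fst (fst u), (snd (fst u), snd u)))
          (fun hk : (dU B * dU C -> dX A) * (dU A -> (dU C -> dX B) * (dU B -> dX C)) =>
             (fun c => (fun b => fst hk (b, c), fun a => fst (snd hk a) c),
              fun ab => snd (snd hk (fst ab)) (snd ab))) _).
  intros [[a b] c] [h k]; apply le_of_eq, op_assoc.
Defined.

Definition dtensor_assoc_inv A B C :
  DHom (dtensor A (dtensor B C)) (dtensor (dtensor A B) C).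
Proof.
  refine (Build_DHom (fun u : dU A * (dU B * dU C) => ((fst u, fst (snd u)), snd (snd u)))
          (fun hk : (dU C -> (dU B -> dX A) * (dU A -> dX B)) * (dU A * dU B -> dX C) =>
             (fun bc => fst (fst hk (snd bc)) (fst bc),
              fun a => (fun c => snd (fst hk c) a, fun b => snd hk (a, b)))) _).
  intros [a [b c]] [h k]; apply le_of_eq; symmetry; apply op_assoc.
Defined.

Definition dcurry_r {A B C} (f : DHom (dtensor A C) B) : DHom C (drimp A B).
Proof.
  refine (Build_DHom (fun c => (fun a => hf f (a, c), fun y => fst (hF f y) c)
                    : (dU A -> dU B) * (dX B -> dX A))
          (fun ay : dU A * dX B => snd (hF f (snd ay)) (fst ay)) _).
  intros c [a y]; apply rimp_max, (hcond f (a, c) y).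
Defined.

Definition dcurry_l {A B C} (f : DHom (dtensor C A) B) : DHom C (dlimp B A).
Proof.
  refine (Build_DHom (fun c => (fun a => hf f (c, a), fun y => snd (hF f y) c)
                    : (dU A -> dU B) * (dX B -> dX A))
          (fun ay : dU A * dX B => fst (hF f (snd ay)) (fst ay)) _).
  intros c [a y]; apply limp_max, (hcond f (c, a) y).
Defined.

Definition deval_r A B : DHom (dtensor A (drimp A B)) B.
Proof.
  refine (Build_DHom (fun u : dU A * ((dU A -> dU B) * (dX B -> dX A)) => fst (snd u) (fst u))
          (fun y => (fun hH : (dU A -> dU B) * (dX B -> dX A) => snd hH y,
                     fun a => (a, y)) : (_ -> dX A) * (dU A -> dU A * dX B)) _).
  intros [a [h H]] y; apply rimp_in.
Defined.

Definition deval_l A B : DHom (dtensor (dlimp B A) A) B.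
Proof.
  refine (Build_DHom (fun u : ((dU A -> dU B) * (dX B -> dX A)) * dU A => fst (fst u) (snd u))
          (fun y => (fun a => (a, y),
                     fun hH : (dU A -> dU B) * (dX B -> dX A) => snd hH y)
                    : (dU A -> dU A * dX B) * (_ -> dX A)) _).
  intros [[h H] a] y; apply limp_in.
Defined.

Definition dentails A B : Prop := inhabited (DHom A B).

Lemma dentails_refl A : dentails A A.
Proof. exact (inhabits (dhom_id A)). Qed.

Lemma dentails_trans {A B C} : dentails A B -> dentails B C -> dentails A C.
Proof. intros [f] [g]; exact (inhabits (dhom_comp g f)). Qed.

Lemma dentails_tensor {A A' B B'} :
  dentails A A' -> dentails B B' -> dentails (dtensor A B) (dtensor A' B').
Proof. intros [f] [g]; exact (inhabits (dhom_tensor f g)). Qed.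

End DialecticaStructure.

Section ContextInterpretation.

Context {M : BiclosedPoset} (v : nat -> DObj M).

Lemma interp_ctx_cons A G :
  dentails (interp_ctx v (A :: G)) (dtensor (interp v A) (interp_ctx v G)) /\
  dentails (dtensor (interp v A) (interp_ctx v G)) (interp_ctx v (A :: G)).
Proof.
  destruct G.
  - exact (conj (inhabits (dtensor_unit_r_inv _)) (inhabits (dtensor_unit_r _))).
  - split; apply dentails_refl.
Qed.

Lemma interp_ctx_app G D :
  dentails (interp_ctx v (G ++ D)) (dtensor (interp_ctx v G) (interp_ctx v D)) /\
  dentails (dtensor (interp_ctx v G) (interp_ctx v D)) (interp_ctx v (G ++ D)).
Proof.
  induction G as [|A G [IHto IHfrom]]; simpl.
  - exact (conj (inhabits (dtensor_unit_l_inv _)) (inhabits (dtensor_unit_l _))).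
  - destruct (interp_ctx_cons A G) as [cons_to cons_from].
    destruct (interp_ctx_cons A (G ++ D)) as [app_to app_from].
    split.
    + apply (dentails_trans app_to).
      apply (dentails_trans (dentails_tensor (dentails_refl _) IHto)).
      apply (dentails_trans (inhabits (dtensor_assoc_inv _ _ _))).
      exact (dentails_tensor cons_from (dentails_refl _)).
    + apply (dentails_trans (dentails_tensor cons_to (dentails_refl _))).
      apply (dentails_trans (inhabits (dtensor_assoc _ _ _))).
      apply (dentails_trans (dentails_tensor (dentails_refl _) IHfrom)).
      exact app_from.
Qed.

Lemma interp_ctx_replace D1 X Y D2 :
  dentails (interp_ctx v X) (interp_ctx v Y) ->
  dentails (interp_ctx v (D1 ++ X ++ D2)) (interp_ctx v (D1 ++ Y ++ D2)).
Proof.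
  intros XY.
  apply (dentails_trans (proj1 (interp_ctx_app D1 (X ++ D2)))).
  refine (dentails_trans _ (proj2 (interp_ctx_app D1 (Y ++ D2)))).
  apply dentails_tensor; [apply dentails_refl |].
  apply (dentails_trans (proj1 (interp_ctx_app X D2))).
  refine (dentails_trans _ (proj2 (interp_ctx_app Y D2))).
  exact (dentails_tensor XY (dentails_refl _)).
Qed.

End ContextInterpretation.

Lemma soundness G B : derivable G B -> valid G B.
Proof.
  intros H M v; induction H as
    [A | G D1 D2 A B _ IHA _ IHB | | G D A _ IH | G D A B C _ IH | G D A B _ IHA _ IHB
    | G A B _ IH | G D1 D2 A B C _ IHA _ IHC | G A B _ IH | G D1 D2 A B C _ IHB _ IHC].
  - apply dentails_refl.
  - exact (dentails_trans (interp_ctx_replace v D1 G [A] D2 IHA) IHB).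
  - apply dentails_refl.
  - refine (dentails_trans (interp_ctx_replace v G [One] [] D _) IH).
    apply dentails_refl.
  - refine (dentails_trans (interp_ctx_replace v G [Tens A B] [A; B] D _) IH).
    apply dentails_refl.
  - exact (dentails_trans (proj1 (interp_ctx_app v G D)) (dentails_tensor IHA IHB)).
  - destruct (dentails_trans (proj2 (interp_ctx_cons v A G)) IH) as [f].
    exact (inhabits (dcurry_r f)).
  - change (G ++ RImp A B :: D2) with (G ++ [RImp A B] ++ D2); rewrite (app_assoc G).
    refine (dentails_trans (interp_ctx_replace v D1 (G ++ [RImp A B]) [B] D2 _) IHC).
    apply (dentails_trans (proj1 (interp_ctx_app v G [RImp A B]))).
    refine (dentails_trans (dentails_tensor IHA (dentails_refl _)) _).
    exact (inhabits (deval_r _ _)).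
  - destruct (dentails_trans (proj2 (interp_ctx_app v G [B])) IH) as [f].
    exact (inhabits (dcurry_l f)).
  - refine (dentails_trans (interp_ctx_replace v D1 (LImp A B :: G) [A] D2 _) IHC).
    apply (dentails_trans (proj1 (interp_ctx_cons v (LImp A B) G))).
    refine (dentails_trans (dentails_tensor (dentails_refl _) IHB) _).
    exact (inhabits (deval_l _ _)).
Qed.

Lemma derivable_trans A B C : derivable [A] B -> derivable [B] C -> derivable [A] C.
Proof. intros AB BC; exact (d_cut [A] [] [] B C AB BC). Qed.

Lemma derivable_tens_mono A A' B B' :
  derivable [A] A' -> derivable [B] B' -> derivable [Tens A B] (Tens A' B').
Proof. intros AA' BB'; apply (d_tensl []), (d_tensr [A] [B]); assumption. Qed.

Lemma derivable_rimp_mono A A' B B' :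
  derivable [A'] A -> derivable [B] B' -> derivable [RImp A B] (RImp A' B').
Proof. intros A'A BB'; apply d_rimpr, (d_rimpl [A'] []); assumption. Qed.

Lemma derivable_limp_mono A A' B B' :
  derivable [A'] A -> derivable [B] B' -> derivable [LImp B A] (LImp B' A').
Proof. intros A'A BB'; apply d_limpr, (d_limpl [A'] []); assumption. Qed.

Definition below (A : formula) : formula -> Prop := fun C => derivable [C] A.

(* A class of interderivable formulas is encoded by its principal downset, so
   that interderivable formulas give equal classes and the order is inclusion;
   operations on classes use representatives picked by choice. *)
Definition lclass : Type := {P : formula -> Prop | exists A, P = below A}.

Definition class_of (A : formula) : lclass := exist _ (below A) (ex_intro _ A eq_refl).

Definition rep (p : lclass) : formula :=
  proj1_sig (constructive_indefinite_description _ (proj2_sig p)).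

Definition lclass_le (p q : lclass) : Prop := forall C, proj1_sig p C -> proj1_sig q C.

Lemma lclass_le_antisym p q : lclass_le p q -> lclass_le q p -> p = q.
Proof.
  destruct p as [P HP], q as [Q HQ]; simpl; intros PQ QP.
  apply eq_sig_hprop; [intros; apply proof_irrelevance |]; simpl.
  apply functional_extensionality; intro C; apply propositional_extensionality.
  split; [apply PQ | apply QP].
Qed.

Lemma class_of_le A B : lclass_le (class_of A) (class_of B) <-> derivable [A] B.
Proof.
  split.
  - intros AB; apply AB, d_ax.
  - intros AB C CA; exact (derivable_trans _ _ _ CA AB).
Qed.

Lemma class_of_eq A B : derivable [A] B -> derivable [B] A -> class_of A = class_of B.
Proof. rewrite <- !class_of_le; apply lclass_le_antisym. Qed.

Lemma class_of_rep p : class_of (rep p) = p.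
Proof.
  unfold rep; destruct p as [P HP]; simpl.
  destruct (constructive_indefinite_description _ HP) as [A ->]; simpl.
  apply eq_sig_hprop; [intros; apply proof_irrelevance | reflexivity].
Qed.

Lemma lclass_ind (P : lclass -> Prop) : (forall A, P (class_of A)) -> forall p, P p.
Proof. intros HP p; rewrite <- class_of_rep; apply HP. Qed.

Lemma rep_class_of A : derivable [rep (class_of A)] A /\ derivable [A] (rep (class_of A)).
Proof.
  rewrite <- !class_of_le, class_of_rep.
  split; intros C; trivial.
Qed.

Definition lclass_tens (p q : lclass) : lclass := class_of (Tens (rep p) (rep q)).
Definition lclass_rimp (p q : lclass) : lclass := class_of (RImp (rep p) (rep q)).
Definition lclass_limp (q p : lclass) : lclass := class_of (LImp (rep q) (rep p)).

Lemma lclass_tens_class_of A B : lclass_tens (class_of A) (class_of B) = class_of (Tens A B).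
Proof.
  destruct (rep_class_of A), (rep_class_of B).
  apply class_of_eq; apply derivable_tens_mono; assumption.
Qed.

Lemma lclass_rimp_class_of A B : lclass_rimp (class_of A) (class_of B) = class_of (RImp A B).
Proof.
  destruct (rep_class_of A), (rep_class_of B).
  apply class_of_eq; apply derivable_rimp_mono; assumption.
Qed.

Lemma lclass_limp_class_of A B : lclass_limp (class_of A) (class_of B) = class_of (LImp A B).
Proof.
  destruct (rep_class_of A), (rep_class_of B).
  apply class_of_eq; apply derivable_limp_mono; assumption.
Qed.

Definition lindenbaum : BiclosedPoset.
Proof.
  refine {| car := lclass; le := lclass_le; op := lclass_tens; e := class_of One;
            rimp := lclass_rimp; limp := lclass_limp |};
    repeat (let p := fresh "p" in intro p; induction p using lclass_ind);
    repeat rewrite ?lclass_tens_class_of, ?lclass_rimp_class_of, ?lclass_limp_class_of,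
      ?class_of_le.
  - apply d_ax.
  - apply derivable_trans.
  - apply class_of_eq.
  - apply class_of_eq.
    + apply (d_tensl []), (d_tensl [] [_]).
      exact (d_tensr [_] [_; _] _ _ (d_ax _) (d_tensr [_] [_] _ _ (d_ax _) (d_ax _))).
    + apply (d_tensl []), (d_tensl [_]).
      exact (d_tensr [_; _] [_] _ _ (d_tensr [_] [_] _ _ (d_ax _) (d_ax _)) (d_ax _)).
  - apply class_of_eq.
    + apply (d_tensl []), (d_Il [] [_]), d_ax.
    + exact (d_tensr [] [_] _ _ d_Ir (d_ax _)).
  - apply class_of_eq.
    + apply (d_tensl []), (d_Il [_] []), d_ax.
    + exact (d_tensr [_] [] _ _ (d_ax _) d_Ir).
  - intros AA'; apply derivable_tens_mono; [exact AA' | apply d_ax].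
  - intros BB'; apply derivable_tens_mono; [apply d_ax | exact BB'].
  - apply (d_tensl []), (d_rimpl [_] []); apply d_ax.
  - intros AXB; apply d_rimpr.
    exact (d_cut [_; _] [] [] _ _ (d_tensr [_] [_] _ _ (d_ax _) (d_ax _)) AXB).
  - apply (d_tensl []), (d_limpl [_] []); apply d_ax.
  - intros XAB; apply d_limpr.
    exact (d_cut [_; _] [] [] _ _ (d_tensr [_] [_] _ _ (d_ax _) (d_ax _)) XAB).
Defined.

Definition atom_obj (n : nat) : DObj lindenbaum :=
  @mkDObj lindenbaum unit unit (fun _ _ => class_of (Atom n)).

Lemma interp_atom_obj_rel A u x : drel (interp atom_obj A) u x = class_of A.
Proof.
  revert u x; induction A as [n | | A IHA B IHB | A IHA B IHB | A IHA B IHB];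
    intros u x; simpl; trivial.
  - rewrite IHA, IHB; apply lclass_tens_class_of.
  - rewrite IHA, IHB; apply lclass_rimp_class_of.
  - rewrite IHA, IHB; apply lclass_limp_class_of.
Qed.

Lemma interp_inhabited {M : BiclosedPoset} (v : nat -> DObj M) :
  (forall n, inhabited (dU (v n)) /\ inhabited (dX (v n))) ->
  forall A, inhabited (dU (interp v A)) /\ inhabited (dX (interp v A)).
Proof.
  intros Hv A; induction A as [n | | A [[ua] [xa]] B [[ub] [xb]]
    | A [[ua] [xa]] B [[ub] [xb]] | A [[ua] [xa]] B [[ub] [xb]]]; simpl.
  - apply Hv.
  - split; constructor; exact tt.
  - split; constructor; [exact (ua, ub) | exact (fun _ => xa, fun _ => xb)].
  - split; constructor; [exact (fun _ => ub, fun _ => xa) | exact (ua, xb)].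
  - split; constructor; [exact (fun _ => ua, fun _ => xb) | exact (ub, xa)].
Qed.

Fixpoint ctx_formula (G : list formula) : formula :=
  match G with
  | [] => One
  | [A] => A
  | A :: G' => Tens A (ctx_formula G')
  end.

Lemma interp_ctx_formula {M : BiclosedPoset} (v : nat -> DObj M) G :
  interp_ctx v G = interp v (ctx_formula G).
Proof.
  induction G as [| A [| B G] IH]; trivial.
  change (dtensor (interp v A) (interp_ctx v (B :: G))
          = dtensor (interp v A) (interp v (ctx_formula (B :: G)))).
  now rewrite IH.
Qed.

Lemma derivable_ctx_formula G : derivable G (ctx_formula G).
Proof.
  induction G as [| A [| B G] IH].
  - apply d_Ir.
  - apply d_ax.
  - exact (d_tensr [A] (B :: G) _ _ (d_ax _) IH).
Qed.

Lemma completeness G B : valid G B -> derivable G B.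
Proof.
  intros V; destruct (V lindenbaum atom_obj) as [f].
  rewrite interp_ctx_formula in f.
  assert (atoms_inhabited : forall n, inhabited (dU (atom_obj n)) /\ inhabited (dX (atom_obj n)))
    by (split; constructor; exact tt).
  destruct (interp_inhabited _ atoms_inhabited (ctx_formula G)) as [[u] _].
  destruct (interp_inhabited _ atoms_inhabited B) as [_ [y]].
  pose proof (hcond f u y) as GB; rewrite !interp_atom_obj_rel in GB.
  apply class_of_le in GB.
  pose proof (d_cut G [] [] _ _ (derivable_ctx_formula G) GB) as GB'.
  now rewrite app_nil_r in GB'.
Qed.

Theorem theorem1 :
  (forall (G : list formula) (B : formula), derivable G B -> valid G B) /\
  (forall (G : list formula) (B : formula), valid G B -> derivable G B).
Proof. split; [apply soundness | apply completeness]. Qed.
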